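(* Let $T_{\mathfrak{so}_4} \in \mathfrak{so}_4^* \otimes \mathfrak{so}_4^* \otimes \mathfrak{so}_4$ be the structure tensor of the complex Lie algebra $\mathfrak{so}_4$. Then its border rank satisfies $\underline{\mathbf{R}}(T_{\mathfrak{so}_4}) \geq 9$.
   Context: $\mathfrak{so}_n$ denotes the complex Lie algebra of skew-symmetric $n\times n$ complex matrices with bracket $[x,y]=xy-yx$ (note $\mathfrak{so}_4\simeq\mathfrak{sl}_2\times\mathfrak{sl}_2$). For a Lie algebra $\mathfrak{g}$, its structure tensor $T_{\mathfrak{g}}\in\mathfrak{g}^*\otimes\mathfrak{g}^*\otimes\mathfrak{g}$ is the tensor corresponding to the bilinear map $(x,y)\mapsto[x,y]$; in a basis $\{a_i\}$ with dual basis $\{\alpha^i\}$ and $[a_i,a_j]=\sum_k A_{ij}^k a_k$, it is $\sum_{i,j,k}A_{ij}^k\,\alpha^i\otimes\alpha^j\otimes a_k$. For a tensor $T\in A\otimes B\otimes C$ over $\mathbb{C}$, the rank of $T$ is the minimal $r$ with $T=\sum_{i=1}^r a_i\otimes b_i\otimes c_i$, and the border rank $\underline{\mathbf{R}}(T)$ is the minimal $r$ such that $T=\lim_{\epsilon\to 0}T_\epsilon$ with each $T_\epsilon$ of rank at most $r$. *)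

From HB Require Import structures.
From mathcomp Require Import all_boot all_order all_algebra.
From mathcomp Require Import complex.
From mathcomp Require Import reals.
Set Implicit Arguments. Unset Strict Implicit. Unset Printing Implicit Defensive.
Import Order.TTheory GRing.Theory Num.Theory.
Local Open Scope ring_scope.

(* A tensor in A (x) B (x) C, written in coordinates w.r.t. bases indexed by
   the finite types I, J, K, with coefficients in a ring F. *)
Definition tensor (F : Type) (I J K : finType) := I -> J -> K -> F.

Definition rank_le (F : comNzRingType) (I J K : finType) (T : tensor F I J K)
  (r : nat) : Prop :=
  exists (a : 'I_r -> I -> F) (b : 'I_r -> J -> F) (c : 'I_r -> K -> F),
    forall i j k, T i j k = \sum_(l < r) a l i * b l j * c l k.

(* border rank T <= r over C = complex R : T is a limit of tensors of rank
   at most r, i.e. T lies in the Euclidean closure of the set of tensors of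
   rank <= r (every neighbourhood of T contains such a tensor). *)
Definition border_rank_le (R : realType) (I J K : finType)
  (T : tensor (complex R) I J K) (r : nat) : Prop :=
  forall e : R, 0 < e ->
    exists S : tensor (complex R) I J K,
      rank_le S r /\ forall i j k, `|S i j k - T i j k| < (e%:C)%C.

Definition so_idx (n : nat) : finType := {x : 'I_n * 'I_n | (x.1 < x.2)%N}.

Definition so_basis (F : comNzRingType) (n : nat) (x : so_idx n) : 'M[F]_n :=
  delta_mx (val x).1 (val x).2 - delta_mx (val x).2 (val x).1.

Definition so_coord (F : comNzRingType) (n : nat) (z : so_idx n) (M : 'M[F]_n) : F :=
  M (val z).1 (val z).2.

Definition so_structure_tensor (F : comNzRingType) (n : nat)
  : tensor F (so_idx n) (so_idx n) (so_idx n) :=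
  fun x y z => so_coord z (so_basis F x *m so_basis F y - so_basis F y *m so_basis F x).
Arguments so_structure_tensor : clear implicits.

(* Koszul flattening.  Restrict the first factor of the structure tensor T of
   so_4 to the span A' of the basis vectors e01, e02, e03, and send a tensor S
   on A' x B x C to the 18 x 18 matrix K(S) = sum_k [e_k]_x (x) S(e_k, -, -),
   where [v]_x is the 3 x 3 cross-product matrix.  For S = a (x) b (x) c this
   is [a]_x (x) b c^T, of rank at most 2 because a skew-symmetric matrix of odd
   order is singular; hence rank K(S) <= 2 R(S).  An explicit integer matrix N
   with K(T) N = 2 certifies that K(T) is invertible, and by diagonal dominance
   of K(S) N every K(S) with S close enough to T is invertible as well.  A
   tensor of rank r close to T therefore gives 18 <= 2 r. *)

From HB Require Import structures.
From mathcomp Require Import all_boot all_order all_algebra.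
From mathcomp Require Import complex reals mxtens ring lra.
Set Implicit Arguments. Unset Strict Implicit. Unset Printing Implicit Defensive.
Import Order.TTheory GRing.Theory Num.Theory.
Local Open Scope ring_scope.

Lemma rank_le_comp (F : comNzRingType) (I J K I' J' K' : finType)
    (T : tensor F I J K) (f : I' -> I) (g : J' -> J) (h : K' -> K) r :
  rank_le T r -> rank_le (fun i j k => T (f i) (g j) (h k)) r.
Proof.
case=> a [b [c defT]].
by exists (fun l => a l \o f), (fun l => b l \o g), (fun l => c l \o h).
Qed.

Lemma mxrank_skew_odd (F : numFieldType) n (A : 'M[F]_n) :
  A^T = - A -> odd n -> (\rank A < n)%N.
Proof.
move=> skewA odd_n.
have detA0 : \det A = 0.
  have /eqP : \det A = - \det A.
    by rewrite -{1}det_tr skewA -scaleN1r detZ -signr_odd odd_n mulN1r.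
  by rewrite -subr_eq0 opprK -mulr2n mulrn_eq0 => /eqP.
rewrite ltn_neqAle rank_leq_row andbT; apply/eqP => rkA.
have : A \in unitmx by rewrite -row_free_unit /row_free rkA.
by rewrite unitmxE detA0 unitr0.
Qed.

Lemma mxrank_tensmx_le (F : fieldType) m n p q
    (A : 'M[F]_(m, n)) (B : 'M[F]_(p, q)) :
  (\rank (A *t B) <= \rank A * \rank B)%N.
Proof.
rewrite -{1}[A]mulmx_base -{1}[B]mulmx_base -tensmx_mul.
exact: leq_trans (mxrankM_maxl _ _) (rank_leq_col _).
Qed.

Lemma mxrank_sum_le (F : fieldType) m n I (r : seq I) (P : pred I)
    (A : I -> 'M[F]_(m, n)) :
  (\rank (\sum_(i <- r | P i) A i)%R <= \sum_(i <- r | P i) \rank (A i))%N.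
Proof.
elim/big_rec2: _ => [|i k B _ le_B_k]; first by rewrite mxrank0.
exact: leq_trans (mxrank_add _ _) (leq_add (leqnn _) le_B_k).
Qed.

Lemma row_free_scalar_add (F : numFieldType) n (c d : F) (E : 'M[F]_n) :
  (forall i j, `|E i j| <= d) -> d *+ n < `|c| -> row_free (c%:M + E).
Proof.
move=> le_E_d lt_dn_c; rewrite -kermx_eq0; apply/rowV0P => y /sub_kermxP yA0.
set s := \sum_i `|y 0 i|.
have le_ys j : `|c| * `|y 0 j| <= d * s.
  move/rowP/(_ j): yA0; rewrite mulmxDr mul_mx_scalar !mxE => /eqP.
  rewrite addr_eq0 => /eqP cy; rewrite -normrM cy normrN mulr_sumr.
  apply: le_trans (ler_norm_sum _ _ _) _; apply: ler_sum => i _.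
  by rewrite normrM mulrC ler_wpM2r.
have le_cs : `|c| * s <= d *+ n * s.
  rewrite mulr_sumr; apply: le_trans (ler_sum _ (fun j _ => le_ys j)) _.
  by rewrite sumr_const card_ord mulrnAl.
have s0 : s = 0.
  apply/eqP; rewrite eq_le (sumr_ge0 _ (fun i _ => normr_ge0 _)) andbT.
  have : (`|c| - d *+ n) * s <= 0 by rewrite mulrBl subr_le0.
  by rewrite pmulr_rle0 ?subr_gt0.
apply/rowP => i; rewrite mxE; apply/normr0_eq0.
by move/psumr_eq0P: s0 => ->.
Qed.

Lemma row_free_close (F : numFieldType) n (K N S : 'M[F]_n) (c b d : F) :
  K *m N = c%:M -> (forall i j, `|N i j| <= b) ->
  (forall i j, `|S i j - K i j| <= d) -> (d * b) *+ (n * n) < `|c| -> row_free S.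
Proof.
move=> KN le_N_b le_SK_d small.
have SN : S *m N = c%:M + (S - K) *m N by rewrite mulmxBl KN addrC subrK.
have : row_free (S *m N).
  rewrite SN; apply: (row_free_scalar_add (d := (d * b) *+ n)); last by rewrite -mulrnA.
  move=> i j; rewrite mxE; apply: le_trans (ler_norm_sum _ _ _) _.
  rewrite -[n in _ *+ n]card_ord -sumr_const; apply: ler_sum => k _.
  by rewrite normrM !mxE ler_pM.
rewrite /row_free => /eqP rkSN; rewrite eqn_leq rank_leq_row -{1}rkSN.
exact: mxrankM_maxl.
Qed.

Definition sparse_mx (R : nmodType) m n (es : seq ('I_m * 'I_n * R)) : 'M[R]_(m, n) :=
  \matrix_(i, j) \sum_(e <- es | e.1 == (i, j)) e.2.

Lemma mulmx_sparse_mxE (R : pzSemiRingType) m n p (A : 'M[R]_(m, n))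
    (es : seq ('I_n * 'I_p * R)) i j :
  (A *m sparse_mx es) i j = \sum_(e <- es | e.1.2 == j) A i e.1.1 * e.2.
Proof.
rewrite mxE; under eq_bigr do rewrite mxE big_distrr /=.
rewrite (exchange_big_dep xpredT) //= [RHS]big_mkcond; apply: eq_bigr => e _.
case: e => [[k l] c] /=; case: eqP => [->|ne_lj].
  by rewrite (big_pred1 k) // => k'; rewrite xpair_eqE eqxx andbT eq_sym.
by rewrite big_pred0 // => k'; rewrite xpair_eqE; apply/andP => -[_ /eqP].
Qed.

Definition skew_delta (F : pzRingType) n (a b : 'I_n) : 'M[F]_n :=
  delta_mx a b - delta_mx b a.

Definition skew_coef (F : pzRingType) n (a b i j : 'I_n) : F :=
  ((i == a) && (j == b))%:R - ((i == b) && (j == a))%:R.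

Lemma tr_skew_delta (F : pzRingType) n (a b : 'I_n) :
  (skew_delta F a b)^T = - skew_delta F a b.
Proof. by rewrite /skew_delta linearB /= !trmx_delta opprB. Qed.

Lemma skew_delta_bracket (F : comNzRingType) n (a b c d : 'I_n) :
  skew_delta F a b *m skew_delta F c d - skew_delta F c d *m skew_delta F a b =
  skew_delta F a d *+ (b == c) - skew_delta F b d *+ (a == c)
  - skew_delta F a c *+ (b == d) + skew_delta F b c *+ (a == d).
Proof.
rewrite /skew_delta !(mulmxBl, mulmxBr) !mul_delta_mx_cond.
rewrite [d == a]eq_sym [c == b]eq_sym [d == b]eq_sym [c == a]eq_sym.
by apply/matrixP => i j; rewrite !(mxE, mulmxnE); ring.
Qed.

Definition cross_mx (F : pzRingType) (v : 'I_3 -> F) : 'M[F]_3 :=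
  v 0 *: skew_delta F 2 1 + v 1 *: skew_delta F 0 2 + v 2 *: skew_delta F 1 0.

Lemma cross_mxE (F : pzRingType) (v : 'I_3 -> F) i j :
  cross_mx v i j = v 0 * skew_coef F 2 1 i j + v 1 * skew_coef F 0 2 i j
                   + v 2 * skew_coef F 1 0 i j.
Proof. by rewrite !mxE. Qed.

Lemma normr_cross_mx_le (F : numDomainType) (v : 'I_3 -> F) d :
  (forall k, `|v k| <= d) -> forall i j, `|cross_mx v i j| <= d.
Proof.
move=> le_v_d i j; rewrite !mxE.
case: i => [[|[|[|//]]] ?]; case: j => [[|[|[|//]]] ?]; rewrite /=.
all: rewrite ?(subrr, subr0, sub0r, mulr0, mulr1, mulrN, addr0, add0r, normrN, normr0) //.
all: exact: le_trans (normr_ge0 (v 0)) (le_v_d 0).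
Qed.

Lemma tr_cross_mx (F : pzRingType) (v : 'I_3 -> F) : (cross_mx v)^T = - cross_mx v.
Proof. by rewrite /cross_mx !linearD !linearZ /= !tr_skew_delta !scalerN. Qed.

Lemma mxrank_cross_mx (F : numFieldType) (v : 'I_3 -> F) : (\rank (cross_mx v) <= 2)%N.
Proof. exact: mxrank_skew_odd (tr_cross_mx v) isT. Qed.

(* The Koszul flattening A' (x) B* -> L^2 A' (x) C, with L^2 A' identified with
   A' through the cross product; row (i, y) is [mxtens_index (i, y)]. *)
Definition koszul_flat (F : pzRingType) m n (S : tensor F 'I_3 'I_m 'I_n)
  : 'M[F]_(3 * m, 3 * n) :=
  \matrix_(p, q) cross_mx (fun k => S k (mxtens_unindex p).2 (mxtens_unindex q).2)
                   (mxtens_unindex p).1 (mxtens_unindex q).1.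

Lemma map_koszul_flat (F F' : pzRingType) (f : {rmorphism F -> F'}) m n
    (S : tensor F 'I_3 'I_m 'I_n) :
  map_mx f (koszul_flat S) = koszul_flat (fun i y z => f (S i y z)).
Proof.
by apply/matrixP => p q; rewrite !mxE !(rmorphD, rmorphN, rmorphM, rmorphMn, rmorph1).
Qed.

Lemma eq_koszul_flat (F : pzRingType) m n (S S' : tensor F 'I_3 'I_m 'I_n) :
  (forall i y z, S i y z = S' i y z) -> koszul_flat S = koszul_flat S'.
Proof. by move=> eqS; apply/matrixP => p q; rewrite !mxE !eqS. Qed.

Lemma koszul_flat_rank1 (F : comNzRingType) m n
    (a : 'I_3 -> F) (b : 'I_m -> F) (c : 'I_n -> F) :
  koszul_flat (fun i y z => a i * b y * c z) = cross_mx a *t (\col_y b y *m \row_z c z).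
Proof.
apply/matrixP => p q; case: (mxtens_indexP p) => i y; case: (mxtens_indexP q) => j z.
rewrite tensmxE !mxE !mxtens_indexK big_ord1 !mxE /=; ring.
Qed.

Lemma mxrank_koszul_flat (F : numFieldType) m n (S : tensor F 'I_3 'I_m 'I_n) r :
  rank_le S r -> (\rank (koszul_flat S) <= 2 * r)%N.
Proof.
case=> a [b [c defS]].
have -> : koszul_flat S = \sum_(l < r) koszul_flat (fun i y z => a l i * b l y * c l z).
  apply/matrixP => p q; rewrite summxE !mxE !defS.
  under [RHS]eq_bigr do rewrite !mxE.
  by rewrite !mulr_suml -!big_split.
apply: leq_trans (mxrank_sum_le _ _ _) _.
have -> : (2 * r = \sum_(l < r) 2)%N by rewrite sum_nat_const card_ord mulnC.
apply: leq_sum => l _.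
rewrite koszul_flat_rank1; apply: leq_trans (mxrank_tensmx_le _ _) _.
rewrite -[X in (_ <= X)%N]muln1; apply: leq_mul (mxrank_cross_mx _) _.
exact: leq_trans (mxrankM_maxl _ _) (rank_leq_col _).
Qed.

Lemma koszul_flat_dist (F : numDomainType) m n (S T : tensor F 'I_3 'I_m 'I_n) d :
  (forall i y z, `|S i y z - T i y z| <= d) ->
  forall p q, `|koszul_flat S p q - koszul_flat T p q| <= d.
Proof.
move=> le_ST_d p q.
have -> : koszul_flat S p q - koszul_flat T p q =
          cross_mx (fun k => S k (mxtens_unindex p).2 (mxtens_unindex q).2
                           - T k (mxtens_unindex p).2 (mxtens_unindex q).2)
            (mxtens_unindex p).1 (mxtens_unindex q).1.
  by rewrite !mxE; ring.
exact: normr_cross_mx_le.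
Qed.

Lemma so_structure_tensorE (F : comNzRingType) n (x y z : so_idx n) :
  so_structure_tensor F n x y z =
    skew_coef F (val x).1 (val y).2 (val z).1 (val z).2 *+ ((val x).2 == (val y).1)
  - skew_coef F (val x).2 (val y).2 (val z).1 (val z).2 *+ ((val x).1 == (val y).1)
  - skew_coef F (val x).1 (val y).1 (val z).1 (val z).2 *+ ((val x).2 == (val y).2)
  + skew_coef F (val x).2 (val y).1 (val z).1 (val z).2 *+ ((val x).1 == (val y).2).
Proof.
have so_basisE w : so_basis F w = skew_delta F (val w).1 (val w).2 by [].
by rewrite /so_structure_tensor /so_coord !so_basisE skew_delta_bracket !(mxE, mulmxnE).
Qed.

Lemma rmorph_so_structure_tensor (F F' : comNzRingType) (f : {rmorphism F -> F'}) n
    (x y z : so_idx n) :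
  f (so_structure_tensor F n x y z) = so_structure_tensor F' n x y z.
Proof.
have map_so_basis w : map_mx f (so_basis F w) = so_basis F' w.
  by rewrite map_mxB !map_delta_mx.
by rewrite /so_structure_tensor /so_coord -!map_so_basis -!map_mxM -map_mxB [RHS]mxE.
Qed.

(* Unlike [ord_enum], built without [insub], so that it reduces under [vm_compute]. *)
Fixpoint ord_seq n : seq 'I_n :=
  if n is n'.+1 then ord0 :: map (lift ord0) (ord_seq n') else [::].

Lemma mem_ord_seq n (i : 'I_n) : i \in ord_seq n.
Proof.
elim: n i => [[] //|n IHn] i; rewrite inE.
case: (unliftP ord0 i) => [j -> | ->]; last by rewrite eqxx.
by rewrite mem_map ?IHn ?orbT //; exact: lift_inj.
Qed.

Lemma ord_seq_all2 m n (P : 'I_m -> 'I_n -> bool) :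
  all (fun i => all (P i) (ord_seq n)) (ord_seq m) -> forall i j, P i j.
Proof.
by move=> /allP P_all i j; apply: (allP (P_all i (mem_ord_seq i))); exact: mem_ord_seq.
Qed.

(* [inZp] rather than [inord], which goes through [insub] as well. *)
Definition so4_pair (x : 'I_6) : 'I_4 * 'I_4 :=
  let: (p, q) := nth (0, 0) [:: (0, 1); (0, 2); (0, 3); (1, 2); (1, 3); (2, 3)]%N x in
  (inZp p, inZp q).

Lemma so4_pair_lt x : ((so4_pair x).1 < (so4_pair x).2)%N.
Proof. by case: x => [[|[|[|[|[|[|]]]]]]]. Qed.

Definition so4_idx (x : 'I_6) : so_idx 4 := exist _ (so4_pair x) (so4_pair_lt x).

Definition so4_restrict (F : Type) (T : tensor F (so_idx 4) (so_idx 4) (so_idx 4))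
  : tensor F 'I_3 'I_6 'I_6 :=
  fun i y z => T (so4_idx (widen_ord (isT : (3 <= 6)%N) i)) (so4_idx y) (so4_idx z).

Definition so4_slice (F : comNzRingType) := so4_restrict (so_structure_tensor F 4).

Local Notation entry p q c := ((@Ordinal (3 * 6) p%N isT, @Ordinal (3 * 6) q%N isT), c).

(* Twice the inverse of [koszul_flat (so4_slice int)], computed by exact
   elimination outside Rocq. *)
Definition so4_cert : 'M[int]_(3 * 6) := sparse_mx [::
  entry 0 5 (-1); entry 0 10 (-1); entry 0 15 1; entry 1 11 (-2); entry 2 17 (-2);
  entry 3 12 (-2); entry 4 6 2; entry 5 0 (-1); entry 5 7 1; entry 5 14 1;
  entry 6 4 2; entry 7 5 1; entry 7 10 1; entry 7 15 1; entry 8 16 2;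
  entry 9 13 (-2); entry 10 0 (-1); entry 10 7 1; entry 10 14 (-1); entry 11 1 (-2);
  entry 12 3 (-2); entry 13 9 (-2); entry 14 5 1; entry 14 10 (-1); entry 14 15 (-1);
  entry 15 0 1; entry 15 7 1; entry 15 14 (-1); entry 16 8 2; entry 17 2 (-2)].

Lemma so4_koszul_cert : koszul_flat (so4_slice int) *m so4_cert = 2%:M.
Proof.
apply/matrixP => p q; rewrite mulmx_sparse_mxE mxE.
(* Turning the filter into an [if] keeps [vm_compute] from evaluating the
   summands of the discarded entries. *)
rewrite big_mkcond.
under eq_bigr do rewrite mxE cross_mxE /so4_slice /so4_restrict !so_structure_tensorE /=.
apply/eqP; move: p q; apply: ord_seq_all2.
by rewrite unlock; vm_compute.
Qed.

Lemma so4_cert_bound p q : `|so4_cert p q| <= 2.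
Proof. by rewrite mxE; move: p q; apply: ord_seq_all2; rewrite unlock; vm_compute. Qed.

Lemma so4_koszul_inverse (F : comNzRingType) :
  koszul_flat (so4_slice F) *m map_mx intr so4_cert = 2%:M.
Proof.
have -> : koszul_flat (so4_slice F) = map_mx intr (koszul_flat (so4_slice int)).
  rewrite map_koszul_flat; apply: eq_koszul_flat => i y z.
  by rewrite rmorph_so_structure_tensor.
by rewrite -map_mxM so4_koszul_cert map_scalar_mx rmorph_nat.
Qed.

Theorem theorem4 (R : realType) (r : nat) :
  border_rank_le (so_structure_tensor (complex R) 4) r -> (9 <= r)%N.
Proof.
pose e : R := 1000%:R^-1.
move=> /(_ e) [|S [rkS closeS]]; first by rewrite invr_gt0 ltr0n.
have /eqP rk_full : row_free (koszul_flat (so4_restrict S)).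
  apply: (row_free_close (so4_koszul_inverse _) (b := 2) (d := (e%:C)%C)).
  - by move=> p q; rewrite mxE -intr_norm (ler_int _ _ 2) so4_cert_bound.
  - by apply: koszul_flat_dist => i y z; exact: ltW (closeS _ _ _).
  rewrite normr_nat -[X in (_ * X) *+ _](rmorph_nat (real_complex R)) -rmorphM -rmorphMn.
  by rewrite -(rmorph_nat (real_complex R)) ltcR /e -mulr_natr; lra.
have := mxrank_koszul_flat (rank_le_comp _ _ _ rkS : rank_le (so4_restrict S) r).
by rewrite rk_full (_ : (3 * 6 = 2 * 9)%N) // leq_pmul2l.
Qed.
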